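(* For any $n$ and $k$ with $k=o(\sqrt n)$, there exists a binary $k$-batch code of dimension $n$ with redundancy $\mathcal{O}(n^{2/3}k^{5/3})$. In particular, for $0<\epsilon<1/2$, $r_B(n,n^\epsilon)=\mathcal{O}(n^{2/3+5\epsilon/3})$.
   Context: A binary linear code of length $N$ encoding $n$ information bits $x_1,\dots,x_n$ is a $k$-batch code if for every multiset $\{i_1,\dots,i_k\}$ of indices there exist $k$ mutually disjoint sets $R_1,\dots,R_k$ of coordinates such that $x_{i_j}$ is a function of the codeword bits indexed by $R_j$. Its redundancy is $N-n$; $r_B(n,k)$ is the minimum redundancy of a binary $k$-batch code of dimension $n$. *)

From Stdlib Require Import Reals.
From mathcomp Require Import all_boot all_algebra.

Set Implicit Arguments.
Unset Strict Implicit.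
Unset Printing Implicit Defensive.

Local Open Scope ring_scope.

(* A binary linear code of length N and dimension n, given by a generator
   matrix G of full row rank n; the information word x : 'rV_n is encoded
   as the codeword x *m G. *)

Definition recovers (n N : nat) (G : 'M['F_2]_(n, N)) (R : {set 'I_N}) (i : 'I_n) : Prop :=
  exists f : ('I_N -> 'F_2) -> 'F_2,
    forall x : 'rV['F_2]_n,
      x ord0 i = f (fun j => if j \in R then (x *m G) ord0 j else 0).

(* k-batch code: for every multiset {i_1,...,i_k} of indices (given as a
   list idx : 'I_k -> 'I_n, repetitions allowed) there are k pairwise
   disjoint coordinate sets R_1..R_k with x_{i_j} recoverable from R_j. *)
Definition is_batch_code (n N k : nat) (G : 'M['F_2]_(n, N)) : Prop :=
  \rank G = n /\
  forall idx : 'I_k -> 'I_n,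
    exists R : 'I_k -> {set 'I_N},
      (forall j j' : 'I_k, j != j' -> [disjoint R j & R j']) /\
      (forall j : 'I_k, recovers G (R j) (idx j)).

(* There is a binary k-batch code of dimension n with redundancy N - n <= r;
   i.e. r_B(n,k) <= r. *)
Definition batch_code_with_redundancy (n k r : nat) : Prop :=
  exists (N : nat) (G : 'M['F_2]_(n, N)), is_batch_code k G /\ (N - n <= r)%N.

Definition floor_pow (n : nat) (eps : R) : nat :=
  Z.to_nat (Int_part (Rpower (INR n) eps)%R).

Local Open Scope R_scope.
Definition one_half : R := 1 / 2.
Definition cor_exponent (eps : R) : R := 2 / 3 + 5 * eps / 3.

(* Index the information bits by distinct points of F^3, where F is a field of
   order q = 2^e, and fix 2k slopes s in F.  For each slope, the lines with
   direction (1, s, s^2) partition F^3 into q^2 lines, each of which carries one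
   parity bit, so the redundancy is 2k q^2.  The bit of a point P is recovered
   from the parity bit of its s-line and the other information bits on that
   line.  Any three directions (1, s, s^2) are linearly independent
   (Vandermonde), so for a given line l with slope s' through P' at most one
   slope s != s' makes the s-line through P meet l outside {P, P'}.  Hence each
   requested bit forbids at most two slopes to every other one, and 2k slopes
   let us choose slopes greedily so that the k recovery sets are pairwise
   disjoint.  Choosing q minimal with n <= q^3 and 2k <= q gives q^3 <= 64 n k
   when k^2 <= n, whence r^3 = 8 k^3 q^6 <= 32^3 n^2 k^5. *)

From Stdlib Require Import Reals Lra ZArith.
From mathcomp Require Import all_boot all_algebra all_field.
From mathcomp Require Import ring zify.

Set Implicit Arguments.
Unset Strict Implicit.
Unset Printing Implicit Defensive.

Import GRing.Theory.

Section MomentLines.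
Local Open Scope ring_scope.
Variable K : idomainType.

Definition point := (K * K * K)%type.

(* Points have the same key iff they lie on a common line with direction (1, s, s^2). *)
Definition line_key (s : K) (p : point) : K * K :=
  (p.1.2 - s * p.1.1, p.2 - s ^+ 2 * p.1.1).

Lemma line_key_triangle (s1 s2 s : K) (P p1 p2 : point) :
  s1 != s2 -> s1 != s ->
  line_key s1 p1 = line_key s1 P -> line_key s2 p2 = line_key s2 P ->
  line_key s p1 = line_key s p2 -> p1 = P.
Proof.
have subr0 (a b : K) : a = b -> a - b = 0 by move->; rewrite subrr.
case: p1 P p2 => [[x1 y1] z1] [[x y] z] [[x2 y2] z2] ns12 ns1.
move=> [/subr0 e1y /subr0 e1z] [/subr0 e2y /subr0 e2z] [/subr0 ey /subr0 ez].
have : (x1 - x) * (s1 - s2) * (s1 - s) = 0.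
  have -> : (x1 - x) * (s1 - s2) * (s1 - s) =
    ((z1 - s ^+ 2 * x1) - (z2 - s ^+ 2 * x2)) - (s2 + s) * ((y1 - s * x1) - (y2 - s * x2))
    - ((z1 - s1 ^+ 2 * x1) - (z - s1 ^+ 2 * x)) + ((z2 - s2 ^+ 2 * x2) - (z - s2 ^+ 2 * x))
    + (s2 + s) * (((y1 - s1 * x1) - (y - s1 * x)) - ((y2 - s2 * x2) - (y - s2 * x))) by ring.
  by rewrite ez ey e1z e2z e1y e2y; ring.
move/eqP; rewrite !mulf_eq0 !subr_eq0 (negbTE ns12) (negbTE ns1) !orbF => /eqP ex.
rewrite ex in e1y e1z *; congr (_, _, _); apply/eqP; rewrite -subr_eq0.
  by rewrite -e1y; apply/eqP; ring.
by rewrite -e1z; apply/eqP; ring.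
Qed.

End MomentLines.

Lemma card_bigcup_ord_le (T : finType) k (B : 'I_k -> {set T}) :
  #|\bigcup_(j < k) B j| <= \sum_(j < k) #|B j|.
Proof.
elim: k B => [|k IHk] B; first by rewrite !big_ord0 cards0.
rewrite !big_ord_recl; apply: leq_trans (leq_card_setU _ _).1 _.
by rewrite leq_add2l.
Qed.

Section GreedyAssignment.
Variables (X : Type) (D : finType) (good : X -> D -> X -> D -> bool) (c : nat).
Hypothesis good_sym : forall x a y b, good x a y b = good y b x a.
Hypothesis card_bad : forall x y b, #|[set a | ~~ good x a y b]| <= c.
Hypothesis c_gt0 : 0 < c.

Lemma greedy_assignment k (pts : 'I_k -> X) : c * k <= #|D| ->
  exists sg : 'I_k -> D,
    forall j j', j != j' -> good (pts j) (sg j) (pts j') (sg j').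
Proof.
elim: k pts => [|k IHk] pts ck.
  by exists (fun j : 'I_0 => False_rect _ (notF (ltn_ord j))) => -[].
have [sg sgP] := IHk (pts \o lift ord0) (leq_trans (leq_mul (leqnn c) (leqnSn k)) ck).
set U := \bigcup_(j < k) [set a | ~~ good (pts ord0) a (pts (lift ord0 j)) (sg j)].
have : #|U| < #|D|.
  apply: leq_ltn_trans (card_bigcup_ord_le _) _.
  apply: leq_ltn_trans (_ : _ <= \sum_(j < k) c) _; first exact: leq_sum.
  by rewrite sum_nat_const card_ord; lia.
rewrite -[X in _ < X](cardsC U) -{1}[#|U|]addn0 ltn_add2l card_gt0 => /set0Pn[a].
rewrite !inE => /bigcupP aU.
have a_good j : good (pts ord0) a (pts (lift ord0 j)) (sg j).
  by apply/negPn/negP => bad; apply: aU; exists j; rewrite ?inE.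
exists (fun j => if unlift ord0 j is Some j' then sg j' else a).
move=> j1 j2; case: unliftP => [j1'|] ->; case: unliftP => [j2'|] -> //.
- by move=> ne; apply: sgP; apply: contra ne => /eqP ->.
- by rewrite good_sym.
Qed.

End GreedyAssignment.

Section SeparatedLines.
Variables (F : finFieldType) (D : finType) (slope : D -> F).
Hypothesis slope_inj : injective slope.

Definition separated (P : point F) (a : D) (P' : point F) (b : D) : bool :=
  (a != b) &&
  [forall p, (line_key (slope a) p == line_key (slope a) P) &&
             (line_key (slope b) p == line_key (slope b) P') ==> (p == P) || (p == P')].

Lemma separated_sym P a P' b : separated P a P' b = separated P' b P a.
Proof.
rewrite /separated eq_sym; congr (_ && _).
by apply: eq_forallb => p; rewrite andbC orbC.
Qed.

Lemma card_not_separated P P' b : #|[set a | ~~ separated P a P' b]| <= 2.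
Proof.
rewrite (cardsD1 b) -[2]/(1 + 1)%N leq_add ?leq_b1 //.
apply/card_le1_eqP => a1 a2; rewrite !inE.
have meet a : a != b -> ~~ separated P a P' b ->
    exists2 p, p != P & line_key (slope a) p = line_key (slope a) P /\
                        line_key (slope b) p = line_key (slope b) P'.
  move=> ab; rewrite /separated ab negb_forall => /existsP[p].
  by rewrite negb_imply negb_or => /andP[/andP[/eqP ea /eqP eb] /andP[pP _]]; exists p.
move=> /andP[a1b /(meet _ a1b)[p1 p1P [e1a e1b]]] /andP[a2b /(meet _ a2b)[p2 _ [e2a e2b]]].
have e12 : line_key (slope b) p1 = line_key (slope b) p2 by rewrite e1b e2b.
apply: contraNeq p1P => a12; apply/eqP; apply: (line_key_triangle _ _ e1a e2a e12).
- by apply: contra a12 => /eqP/slope_inj->.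
- by apply: contra a1b => /eqP/slope_inj->.
Qed.

End SeparatedLines.

Section LineCode.
Local Open Scope ring_scope.
Variables (F : finFieldType) (D : finType) (slope : D -> F).
Variables (n : nat) (pt : 'I_n -> point F).
Hypotheses (slope_inj : injective slope) (pt_inj : injective pt).

Local Notation checks := #|{: D * (F * F)}|.

(* Check (a, v) is the parity of the information bits on the line of slope a and key v. *)
Definition parity_mx : 'M['F_2]_(n, checks) :=
  \matrix_(i, q) (line_key (slope (enum_val q).1) (pt i) == (enum_val q).2)%:R.

Definition line_code : 'M['F_2]_(n, n + checks) := row_mx 1%:M parity_mx.

Lemma rank_line_code : \rank line_code = n.
Proof.
apply/eqP; rewrite eqn_leq rank_leq_row -[X in (X <= _)%N](mxrank1 'F_2 n).
have <- : line_code *m col_mx 1%:M 0 = 1%:M.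
  by rewrite mul_row_col mulmx1 mulmx0 addr0.
exact: mxrankM_maxl.
Qed.

Definition line_through (a : D) (i0 : 'I_n) : {set 'I_n} :=
  [set i | line_key (slope a) (pt i) == line_key (slope a) (pt i0)].

Definition check_of (a : D) (i0 : 'I_n) : 'I_checks :=
  enum_rank (a, line_key (slope a) (pt i0)).

Definition recovery_set (i0 : 'I_n) (a : D) : {set 'I_(n + checks)} :=
  rshift n (check_of a i0) |: [set lshift checks i | i in line_through a i0 :\ i0].

Lemma line_code_check (x : 'rV['F_2]_n) a i0 :
  (x *m line_code) ord0 (rshift n (check_of a i0)) =
  \sum_(i in line_through a i0) x ord0 i.
Proof.
rewrite mul_mx_row mulmx1 row_mxEr mxE [RHS]big_mkcond; apply: eq_bigr => i _.
by rewrite mxE enum_rankK inE; case: eqP; rewrite ?mulr1 ?mulr0.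
Qed.

Lemma line_code_systematic (x : 'rV['F_2]_n) i :
  (x *m line_code) ord0 (lshift checks i) = x ord0 i.
Proof. by rewrite mul_mx_row mulmx1 row_mxEl. Qed.

Lemma recovers_line_code i0 a : recovers line_code (recovery_set i0 a) i0.
Proof.
exists (fun v => v (rshift n (check_of a i0)) -
                 \sum_(i in line_through a i0 :\ i0) v (lshift checks i)) => x.
transitivity ((x *m line_code) ord0 (rshift n (check_of a i0)) -
              \sum_(i in line_through a i0 :\ i0) x ord0 i).
  rewrite line_code_check (bigD1 i0) ?inE //=.
  by rewrite (eq_bigl (mem (line_through a i0 :\ i0))) ?addrK // => i; rewrite !inE andbC.
rewrite setU11; congr (_ - _); apply: eq_bigr => i i_line.
by rewrite setU1r ?imset_f //; symmetry; apply: line_code_systematic.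
Qed.

Lemma disjoint_recovery_sets i0 i1 a b :
  separated slope (pt i0) a (pt i1) b -> [disjoint recovery_set i0 a & recovery_set i1 b].
Proof.
case/andP=> ab /forallP sep; rewrite -setI_eq0; apply/eqP/setP => c.
rewrite in_setI in_set0; apply/negP.
move=> /andP[/setU1P[-> | /imsetP[i i_a ->]] /setU1P[| /imsetP[j j_b]]].
- by move/rshift_inj/enum_rank_inj => -[eab _]; rewrite eab eqxx in ab.
- by move/eqP; rewrite eq_rlshift.
- by move/eqP; rewrite eq_lrshift.
move/lshift_inj=> eij; move: i_a j_b; rewrite -eij !inE.
move=> /andP[ii0 /eqP ea] /andP[ii1 /eqP eb]; move: (sep (pt i)); rewrite ea eb !eqxx /=.
by case/orP=> /eqP/pt_inj eq_i; rewrite eq_i eqxx in ii0 ii1.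
Qed.

Lemma line_code_batch k : (2 * k <= #|D|)%N -> is_batch_code k line_code.
Proof.
move=> kD; split=> [|idx]; first exact: rank_line_code.
have [sg sgP] := greedy_assignment (separated_sym slope) (card_not_separated slope_inj)
  (isT : (0 < 2)%N) (pt \o idx) kD.
exists (fun j => recovery_set (idx j) (sg j)); split=> [j j' jj'|j].
  exact: disjoint_recovery_sets (sgP j j' jj').
exact: recovers_line_code.
Qed.

End LineCode.

Lemma batch_code_of_field (F : finFieldType) n k :
  n <= #|F| ^ 3 -> 2 * k <= #|F| -> batch_code_with_redundancy n k (2 * k * #|F| ^ 2).
Proof.
move=> nF kF.
have nP : n <= #|{: point F}| by rewrite !card_prod -!mulnA.
pose slope (a : 'I_(2 * k)) : F := enum_val (widen_ord kF a).
pose pt (i : 'I_n) : point F := enum_val (widen_ord nP i).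
have slope_inj : injective slope by move=> a b /enum_val_inj/(congr1 val) /= /val_inj.
have pt_inj : injective pt by move=> i j /enum_val_inj/(congr1 val) /= /val_inj.
exists (n + #|{: 'I_(2 * k) * (F * F)}|), (line_code slope pt); split.
  by apply: line_code_batch; rewrite // card_ord.
by rewrite addKn !card_prod card_ord mulnn.
Qed.

Lemma batch_code_with_redundancy0 n : batch_code_with_redundancy n 0 0.
Proof.
exists n, 1%:M%R; split; last by rewrite subnn.
by split=> [|idx]; [exact: mxrank1 | exists (fun _ => set0); split=> -[]].
Qed.

Lemma exists_pow2_size n k : 0 < k -> k ^ 2 <= n ->
  exists2 e, 0 < e & [/\ n <= (2 ^ e) ^ 3, 2 * k <= 2 ^ e & (2 ^ e) ^ 3 <= 64 * n * k].
Proof.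
move=> k_gt0 kn; have n_gt0 : 0 < n by apply: leq_trans kn; rewrite expn_gt0 k_gt0.
pose P e := [&& 0 < e, n <= (2 ^ e) ^ 3 & 2 * k <= 2 ^ e].
have exP : exists e, P e.
  exists (n + 2 * k); rewrite /P addn_gt0 muln_gt0 k_gt0 orbT /=.
  have := ltn_expl (n + 2 * k) (ltnSn 1).
  have : 2 ^ (n + 2 * k) <= (2 ^ (n + 2 * k)) ^ 3 by rewrite expnS leq_pmulr ?expn_gt0.
  lia.
case: (ex_minnP exP) => e /and3P[e_gt0 nq kq] e_min; exists e => //; split => //.
have [e_gt1 | e_le1] := ltnP 1 e; last first.
  rewrite (_ : e = 1); last by lia.
  nia.
have : ~~ P e.-1 by apply/negP => /e_min; lia.
have -> : 2 ^ e = 2 * 2 ^ e.-1 by rewrite -expnS prednK // ltnW.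
rewrite /P (_ : 0 < e.-1 = true) /=; last by lia.
move: (2 ^ e.-1) => h; rewrite negb_and -!ltnNge => /orP[small_n | small_k].
  nia.
have : h ^ 3 < (2 * k) ^ 3 by rewrite ltn_exp2r.
nia.
Qed.

Lemma batch_code_redundancy n k : k ^ 2 <= n ->
  exists r, batch_code_with_redundancy n k r /\ r ^ 3 <= 32 ^ 3 * n ^ 2 * k ^ 5.
Proof.
move=> kn; have [-> | k_gt0] := posnP k.
  by exists 0; split; [exact: batch_code_with_redundancy0 |].
have [e e_gt0 [nq kq qnk]] := exists_pow2_size k_gt0 kn.
have [F _ cardF] := pPrimePowerField (isT : prime 2) e_gt0.
exists (2 * k * #|F| ^ 2); split; first by apply: batch_code_of_field; rewrite cardF.
rewrite cardF; move: (2 ^ e) qnk => q qnk.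
have -> : (2 * k * q ^ 2) ^ 3 = 8 * k ^ 3 * (q ^ 3) ^ 2 by ring.
have -> : 32 ^ 3 * n ^ 2 * k ^ 5 = 8 * k ^ 3 * (64 * n * k) ^ 2 by ring.
by rewrite leq_mul2l leq_exp2r ?qnk ?orbT.
Qed.

Section RealBounds.
Local Open Scope R_scope.

Lemma INR_muln m p : INR (m * p)%N = INR m * INR p.
Proof. exact: mult_INR. Qed.

Lemma INR_expn m e : INR (m ^ e)%N = INR m ^ e.
Proof. by elim: e => [|e IHe] //; rewrite expnS INR_muln IHe. Qed.

Lemma INR_leq m p : (m <= p)%N -> INR m <= INR p.
Proof. by move/leP; apply: le_INR. Qed.

Lemma INR_Int_part_le y : 0 <= y -> INR (Z.to_nat (Int_part y)) <= y.
Proof.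
move=> y_ge0; have [int_le _] := base_Int_part y.
have [int_ge0 | int_lt0] := Z.le_gt_cases 0 (Int_part y).
  by rewrite INR_IZR_INZ Z2Nat.id.
by rewrite (_ : Z.to_nat _ = 0%N) //; lia.
Qed.

Lemma INR_floor_pow_le n eps : INR (floor_pow n eps) <= Rpower (INR n) eps.
Proof. exact/INR_Int_part_le/Rlt_le/exp_pos. Qed.

Lemma floor_pow_sq_le n eps : (0 < n)%N -> 2 * eps <= 1 -> (floor_pow n eps ^ 2 <= n)%N.
Proof.
move=> n_gt0 eps_le; have n_ge1 : 1 <= INR n by apply: (INR_leq n_gt0).
apply/leP/INR_le; rewrite INR_expn.
apply: Rle_trans (pow_incr _ _ _ (conj (pos_INR _) (INR_floor_pow_le n eps))) _.
rewrite -Rpower_pow ?Rpower_mult; last exact: exp_pos.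
rewrite -[X in _ <= X]Rpower_1; last lra.
by apply: Rle_Rpower => //=; lra.
Qed.

Lemma Rpower_cor_exponent_cube x eps : 0 < x ->
  Rpower x (cor_exponent eps) ^ 3 = x ^ 2 * Rpower x eps ^ 5.
Proof.
move=> x_gt0; rewrite -!Rpower_pow ?Rpower_mult -?Rpower_plus //; try exact: exp_pos.
by rewrite /cor_exponent; congr Rpower; simpl; lra.
Qed.

Lemma pow3_le_reg a b : 0 <= b -> a ^ 3 <= b ^ 3 -> a <= b.
Proof.
move=> b_ge0 ab; apply: Rnot_lt_le => ba.
have bb_aa : b * b <= a * a by apply: Rmult_le_compat; lra.
have aa_gt0 : 0 < a * a by apply: Rmult_lt_0_compat; lra.
have : b * (b * b) < a * (a * a).
  apply: Rle_lt_trans (Rmult_le_compat_l _ _ _ b_ge0 bb_aa) _.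
  exact: Rmult_lt_compat_r.
move: ab; rewrite /= !Rmult_1_r; lra.
Qed.

Lemma batch_code_floor_pow_redundancy eps : 0 < eps < one_half ->
  exists (C : R) (N0 : nat), forall n, (N0 <= n)%N ->
    exists r, batch_code_with_redundancy n (floor_pow n eps) r /\
      INR r <= C * Rpower (INR n) (cor_exponent eps).
Proof.
rewrite /one_half => -[eps_gt0 eps_lt]; exists 32, 1%N => n n_gt0.
have eps_le : 2 * eps <= 1 by lra.
have [r [code r_le]] := batch_code_redundancy (floor_pow_sq_le n_gt0 eps_le).
exists r; split => //.
have n_pos : 0 < INR n by apply/lt_0_INR/leP.
apply: pow3_le_reg; first by apply: Rmult_le_pos; [lra | exact/Rlt_le/exp_pos].
rewrite Rpow_mult_distr Rpower_cor_exponent_cube //.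
have := INR_leq r_le; rewrite INR_expn 2!INR_muln !INR_expn => /Rle_trans; apply.
rewrite (_ : INR 32 = 32) ?(Rmult_assoc (32 ^ 3)); last by rewrite INR_IZR_INZ.
apply: (Rmult_le_compat_l (32 ^ 3)); first by apply: pow_le; lra.
apply: (Rmult_le_compat_l (INR n ^ 2)); first by apply: pow_le; lra.
by apply: pow_incr; split; [exact: pos_INR | exact: INR_floor_pow_le].
Qed.

End RealBounds.

Theorem corollary1 :
  (* k = o(sqrt n)  ==>  r_B(n,k) = O(n^(2/3) k^(5/3)), written as
     r^3 <= C n^2 k^5 *)
  (forall kf : nat -> nat,
     (forall m : nat, (0 < m)%N ->
        exists N0 : nat, forall n : nat, (N0 <= n)%N -> (m * kf n ^ 2 <= n)%N) ->
     exists C N0 : nat, forall n : nat, (N0 <= n)%N ->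
       exists r : nat, batch_code_with_redundancy n (kf n) r /\
                       (r ^ 3 <= C * n ^ 2 * kf n ^ 5)%N)
  /\
  (* in particular r_B(n, n^eps) = O(n^(2/3 + 5 eps/3)) for 0 < eps < 1/2 *)
  (forall eps : R, Rlt 0 eps /\ Rlt eps one_half ->
     exists (C : R) (N0 : nat), forall n : nat, (N0 <= n)%N ->
       exists r : nat, batch_code_with_redundancy n (floor_pow n eps) r /\
         Rle (INR r) (Rmult C (Rpower (INR n) (cor_exponent eps)))).
Proof.
split; last exact: batch_code_floor_pow_redundancy.
move=> kf kf_small; have [N0 kfN0] := kf_small 1%N isT.
exists (32 ^ 3)%N, N0 => n n_ge; apply: batch_code_redundancy.
by rewrite -[kf n ^ 2]mul1n; apply: kfN0.
Qed.
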